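(* Let $\dim V=2$ and assume $V$ is a quantum linear space, i.e. $p_{12}p_{21}=1$. Then $$\mathfrak{L}^-(V)=\operatorname{span}\big\{x_1,\;x_2,\;x_2^{\alpha_2}x_1^{\alpha_1}\ :\ 1\le\alpha_2<N_2,\ 1\le\alpha_1<N_1,\ \operatorname{ord}(p_{12})\nmid\alpha_2\ \text{or}\ \operatorname{ord}(p_{12})\nmid\alpha_1\big\},$$ where for $i=1,2$, $N_i:=\operatorname{ord}(p_{ii})$ if $1<\operatorname{ord}(p_{ii})<\infty$, and $N_i:=\infty$ if $p_{ii}=1$ or $p_{ii}$ is not a root of unity.
   Context: $V$ is a braided vector space of diagonal type over an algebraically closed field $F$ of characteristic $0$ with basis $x_1,x_2$, braiding $C(x_i\otimes x_j)=q_{ij}x_j\otimes x_i$, $p_{ij}:=q_{ij}$, and Nichols algebra $\mathfrak{B}(V)$. $\mathfrak{L}^-(V)$ is the Lie subalgebra of $\mathfrak{B}(V)$ generated by $V$ under the commutator $[a,b]^-=ab-ba$. $\operatorname{ord}(a)$ is the multiplicative order of $a\in F^*$ ($\infty$ if $a$ is not a root of unity), and by convention $\infty$ does not divide any integer. *)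

From HB Require Import structures.
From mathcomp Require Import all_boot all_order all_algebra all_field.
Set Implicit Arguments. Unset Strict Implicit. Unset Printing Implicit Defensive.
Import GRing.Theory.
Local Open Scope ring_scope.

Definition i1 : 'I_2 := ord0.
Definition i2 : 'I_2 := ord_max.

(* Words in the letters x1, x2 (tensor monomials of T(V)). *)
Definition word := seq 'I_2.

Fixpoint masks (n : nat) : seq bitseq :=
  if n is n'.+1 then [seq true :: m | m <- masks n'] ++ [seq false :: m | m <- masks n']
  else [:: [::]].

(* Braiding factor of a shuffle: positions with bit true come from the left
   factor u, positions with bit false from the right factor v; each time a
   letter x_j of v is placed to the left of a letter x_i of u we pick up
   c(x_i (x) x_j) = q_ij x_j (x) x_i. *)
Definition shuf_coef (F : nzRingType) (q : 'I_2 -> 'I_2 -> F) (w : word) (m : bitseq) : F :=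
  \prod_(a < size w) \prod_(b < a)
     (if nth false m a && ~~ nth false m b
      then q (nth ord0 w a) (nth ord0 w b) else 1).

(* Elements of the (completed) quantum shuffle algebra: coefficient functions
   on words. Quantum shuffle product (Rosso): *)
Definition shuf_mul (F : nzRingType) (q : 'I_2 -> 'I_2 -> F) (f g : word -> F) : word -> F :=
  fun w => \sum_(m <- masks (size w))
             shuf_coef q w m * f (mask m w) * g (mask (map negb m) w).

Definition shuf_one (F : nzRingType) : word -> F := fun w => if w == [::] then 1 else 0.

Definition gen (F : nzRingType) (i : 'I_2) : word -> F := fun w => if w == [:: i] then 1 else 0.

Definition shuf_pow (F : nzRingType) (q : 'I_2 -> 'I_2 -> F) (f : word -> F) (n : nat) : word -> F :=
  iter n (shuf_mul q f) (shuf_one F).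

Definition shuf_br (F : nzRingType) (q : 'I_2 -> 'I_2 -> F) (a b : word -> F) : word -> F :=
  fun w => shuf_mul q a b w - shuf_mul q b a w.

(* L^-(V): the Lie subalgebra (under [,]^-) generated by V = lspan{x1,x2}. *)
Inductive lie_gen (F : nzRingType) (q : 'I_2 -> 'I_2 -> F) : (word -> F) -> Prop :=
  | lie_x i : lie_gen q (gen F i)
  | lie_add a b : lie_gen q a -> lie_gen q b -> lie_gen q (fun w => a w + b w)
  | lie_scale (c : F) a : lie_gen q a -> lie_gen q (fun w => c * a w)
  | lie_br a b : lie_gen q a -> lie_gen q b -> lie_gen q (shuf_br q a b).

Inductive lspan (F : nzRingType) (S : (word -> F) -> Prop) : (word -> F) -> Prop :=
  | span0 : lspan S (fun _ => 0)
  | span_in a : S a -> lspan S a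
  | span_add a b : lspan S a -> lspan S b -> lspan S (fun w => a w + b w)
  | span_scale (c : F) a : lspan S a -> lspan S (fun w => c * a w).

Definition is_ord (F : nzRingType) (a : F) (n : nat) : Prop :=
  (0 < n)%N /\ a ^+ n = 1 /\ (forall m, (0 < m < n)%N -> a ^+ m <> 1).

(* ord(a) | k, with the convention that infinity divides nothing. *)
Definition ord_dvd (F : nzRingType) (a : F) (k : nat) : Prop :=
  exists n, is_ord a n /\ (n %| k)%N.

(* k < N(a), where N(a) = ord(a) if 1 < ord(a) < oo, and N(a) = oo otherwise. *)
Definition lt_N (F : nzRingType) (a : F) (k : nat) : Prop :=
  forall n, is_ord a n -> (1 < n)%N -> (k < n)%N.

From HB Require Import structures.
From mathcomp Require Import all_boot all_order all_algebra all_field.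
From mathcomp Require Import ring.
From Stdlib Require Import FunctionalExtensionality Classical.
Set Implicit Arguments. Unset Strict Implicit. Unset Printing Implicit Defensive.
Import GRing.Theory.
Local Open Scope ring_scope.

(* Work in the quantum shuffle algebra, where [mono a b] is the normally ordered
   monomial x2^a x1^b.  Since q12 q21 = 1, comparing first letters with the twisted
   Leibniz rule gives x2^a x1^b * x2^c x1^d = q12^(bc) x2^(a+c) x1^(b+d), hence
   [x2^a x1^b, x2^c x1^d] = (q12^(bc) - q12^(ad)) x2^(a+c) x1^(b+d).  The scalar
   vanishes when ord(q12) divides both a+c and b+d, and x_j^n = 0 once n >= N_j
   because its only coefficient is a q-factorial; so the span of the listed monomials
   is closed under the bracket.  Conversely, bracketing with x1 and x2 builds every
   listed monomial from x2 = x2^1 x1^0 with nonzero scalars. *)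

Section MultiplicativeOrder.
Variable R : nzRingType.
Implicit Types (a : R) (k n : nat).

Lemma prim_root_is_ord a n : n.-primitive_root a -> is_ord a n.
Proof.
move=> prim; do ![split]; first exact: prim_order_gt0 prim.
  exact: prim_expr_order.
move=> m /andP[m_gt0 lt_mn]; apply/eqP; rewrite -(prim_order_dvd prim).
by rewrite gtnNdvd.
Qed.

Lemma ord_dvd_expr1 a k : ord_dvd a k -> a ^+ k = 1.
Proof. by case=> n [[_ [an1 _]] /dvdnP[j ->]]; rewrite mulnC exprM an1 expr1n. Qed.

Lemma expr1_ord_dvd a k : (0 < k)%N -> a ^+ k = 1 -> ord_dvd a k.
Proof.
move=> k_gt0 ak1; have [n prim dvd_nk] := prim_order_exists k_gt0 ak1.
by exists n; split=> //; apply: prim_root_is_ord.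
Qed.

Lemma is_ord_neq1 a n : is_ord a n -> (1 < n)%N -> a != 1.
Proof.
case=> _ [_ min_n] n_gt1; apply/eqP => a1.
by apply: (min_n 1%N); rewrite ?n_gt1 ?expr1.
Qed.

End MultiplicativeOrder.

Fixpoint qint (R : nzRingType) (x : R) n : R :=
  if n is m.+1 then 1 + x * qint x m else 0.

Fixpoint qfact (R : nzRingType) (x : R) n : R :=
  if n is m.+1 then qint x m.+1 * qfact x m else 1.

Lemma qintD (R : comNzRingType) (x : R) m n : qint x (m + n) = qint x m + x ^+ m * qint x n.
Proof.
elim: m => [|m IH] /=; first by rewrite add0r expr0 mul1r.
by rewrite IH exprS; ring.
Qed.

Lemma qint_telescope (R : comNzRingType) (x : R) n : (x - 1) * qint x n = x ^+ n - 1.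
Proof.
elim: n => [|n IH] /=; first by rewrite mulr0 subrr.
have -> : x ^+ n.+1 = x * ((x - 1) * qint x n + 1) by rewrite IH subrK exprS.
ring.
Qed.

Lemma qint_ord (R : idomainType) (x : R) n : is_ord x n -> (1 < n)%N -> qint x n = 0.
Proof.
move=> ord_x n_gt1; have [_ [xn1 _]] := ord_x.
have := qint_telescope x n; rewrite xn1 subrr => /eqP.
by rewrite mulf_eq0 subr_eq0 (negbTE (is_ord_neq1 ord_x n_gt1)) => /eqP.
Qed.

Lemma qfact_ord (R : idomainType) (x : R) n k :
  is_ord x n -> (1 < n)%N -> (n <= k)%N -> qfact x k = 0.
Proof.
move=> ord_x n_gt1; elim: k => [|k IH].
  by rewrite leqn0 => /eqP n0; rewrite n0 in n_gt1.
rewrite leq_eqVlt => /orP[/eqP eq_nk|lt_nk]; last by rewrite /= IH // mulr0.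
by change (qint x k.+1 * qfact x k = 0); rewrite -eq_nk qint_ord ?mul0r.
Qed.

Lemma ord2_cases (k : 'I_2) : k = i1 \/ k = i2.
Proof. by case: k => -[|[|]] // ?; [left|right]; apply: val_inj. Qed.

Section QuantumShuffle.
Variables (R : comNzRingType) (q : 'I_2 -> 'I_2 -> R).
Implicit Types (f g : word -> R) (w : word) (m : bitseq) (i j : 'I_2).

Definition der i f : word -> R := fun w => f (i :: w).
Definition braid_char i w : R := \prod_(k <- w) q k i.
Definition twist i f : word -> R := fun w => braid_char i w * f w.

Lemma braid_char_cons i k w : braid_char i (k :: w) = q k i * braid_char i w.
Proof. exact: big_cons. Qed.

Lemma braid_char_mask i w m : size m = size w ->
  braid_char i w = braid_char i (mask m w) * braid_char i (mask (map negb m) w).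
Proof.
elim: w m => [|k w IH] [|b m] //=; first by rewrite /braid_char !big_nil mulr1.
by move=> [size_mw]; case: b; rewrite /= !braid_char_cons (IH m size_mw); ring.
Qed.

Lemma shuf_coefE w m : shuf_coef q w m = \prod_(0 <= a < size w) \prod_(0 <= b < a)
  (if nth false m a && ~~ nth false m b then q (nth ord0 w a) (nth ord0 w b) else 1).
Proof. by rewrite /shuf_coef big_mkord; apply: eq_bigr => a _; rewrite big_mkord. Qed.

Lemma prod_nth_mask (G : 'I_2 -> R) w m :
  \prod_(0 <= a < size w) (if nth false m a then G (nth ord0 w a) else 1)
  = \prod_(k <- mask m w) G k.
Proof.
elim: w m => [|k w IH] m /=.
  by rewrite big_geq // mask0 big_nil.
case: m => [|b m]; first by rewrite big1 ?big_nil // => a _; rewrite nth_nil.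
by rewrite big_nat_recl //; case: b => /=; rewrite ?big_cons -IH ?mul1r.
Qed.

Lemma shuf_coef_cons_true i w m : shuf_coef q (i :: w) (true :: m) = shuf_coef q w m.
Proof.
rewrite !shuf_coefE /= big_nat_recl // big_geq // mul1r.
by apply: eq_bigr => a _; rewrite big_nat_recl //= andbF mul1r.
Qed.

Lemma shuf_coef_cons_false i w m :
  shuf_coef q (i :: w) (false :: m) = braid_char i (mask m w) * shuf_coef q w m.
Proof.
rewrite !shuf_coefE /= big_nat_recl // big_geq // mul1r /braid_char -prod_nth_mask -big_split.
by apply: eq_bigr => a _; rewrite big_nat_recl //= andbT.
Qed.

Lemma shuf_mul_nil f g : shuf_mul q f g [::] = f [::] * g [::].
Proof. by rewrite /shuf_mul /= big_seq1 /shuf_coef big_ord0 mul1r. Qed.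

(* Twisted Leibniz rule: the first letter of a shuffle comes either from the left
   factor, or from the right one after being braided past the whole left factor. *)
Lemma shuf_mul_cons f g i w :
  shuf_mul q f g (i :: w) = shuf_mul q (der i f) g w + shuf_mul q (twist i f) (der i g) w.
Proof.
rewrite /shuf_mul /= big_cat !big_map; congr (_ + _); apply: eq_bigr => m _.
  by rewrite shuf_coef_cons_true.
by rewrite shuf_coef_cons_false /twist /der !mulrA (mulrC (braid_char _ _)).
Qed.

Lemma size_masks n : all (fun m => size m == n) (masks n).
Proof.
elim: n => [|n IH] //=; rewrite all_cat !all_map.
by apply/andP; split; apply: sub_all IH => m /=.
Qed.

Lemma twist_shuf_mul i f g w :
  twist i (shuf_mul q f g) w = shuf_mul q (twist i f) (twist i g) w.
Proof.
rewrite /twist /shuf_mul mulr_sumr !big_seq; apply: eq_bigr => m.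
by move=> /(allP (size_masks _)) /eqP /braid_char_mask ->; ring.
Qed.

Lemma shuf_mul0l g : shuf_mul q (fun _ => 0) g = fun _ => 0.
Proof.
by apply: functional_extensionality => w; rewrite /shuf_mul big1 // => m _; rewrite mulr0 mul0r.
Qed.

Lemma shuf_mul0r f : shuf_mul q f (fun _ => 0) = fun _ => 0.
Proof.
by apply: functional_extensionality => w; rewrite /shuf_mul big1 // => m _; rewrite mulr0.
Qed.

Lemma shuf_mulZl c f g w : shuf_mul q (fun u => c * f u) g w = c * shuf_mul q f g w.
Proof. by rewrite /shuf_mul mulr_sumr; apply: eq_bigr => m _; ring. Qed.

Lemma shuf_mulZr c f g w : shuf_mul q f (fun u => c * g u) w = c * shuf_mul q f g w.
Proof. by rewrite /shuf_mul mulr_sumr; apply: eq_bigr => m _; ring. Qed.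

Lemma shuf_mulDl f1 f2 g w :
  shuf_mul q (fun u => f1 u + f2 u) g w = shuf_mul q f1 g w + shuf_mul q f2 g w.
Proof. by rewrite /shuf_mul -big_split; apply: eq_bigr => m _ /=; ring. Qed.

Lemma shuf_mulDr f g1 g2 w :
  shuf_mul q f (fun u => g1 u + g2 u) w = shuf_mul q f g1 w + shuf_mul q f g2 w.
Proof. by rewrite /shuf_mul -big_split; apply: eq_bigr => m _ /=; ring. Qed.

Lemma der_one i : der i (shuf_one R) = fun _ => 0.
Proof. by []. Qed.

Lemma shuf_mul1l g : shuf_mul q (shuf_one R) g = g.
Proof.
apply: functional_extensionality => w; elim: w g => [|i w IH] g.
  by rewrite shuf_mul_nil mul1r.
rewrite shuf_mul_cons der_one shuf_mul0l add0r.
have -> : twist i (shuf_one R) = shuf_one R.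
  apply: functional_extensionality => -[|k u]; rewrite /twist /shuf_one /= ?mulr0 //.
  by rewrite mulr1 /braid_char big_nil.
exact: IH.
Qed.

Lemma shuf_mul1r f : shuf_mul q f (shuf_one R) = f.
Proof.
apply: functional_extensionality => w; elim: w f => [|i w IH] f.
  by rewrite shuf_mul_nil mulr1.
by rewrite shuf_mul_cons der_one shuf_mul0r IH addr0.
Qed.

Lemma der_gen i j : der i (gen R j) = if i == j then shuf_one R else fun _ => 0.
Proof.
by apply: functional_extensionality => w; rewrite /der /gen eqseq_cons; case: (i == j).
Qed.

Definition xpow j n := shuf_pow q (gen R j) n.

Lemma xpowS j n : xpow j n.+1 = shuf_mul q (gen R j) (xpow j n).
Proof. by []. Qed.

Lemma twist_gen i j : twist i (gen R j) = fun w => q j i * gen R j w.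
Proof.
apply: functional_extensionality => w; rewrite /twist /gen.
by case: eqP => [->|_]; rewrite ?mulr0 // /braid_char big_seq1.
Qed.

Lemma der_xpow i j n :
  der i (xpow j n) = fun w => (if i == j then qint (q j j) n else 0) * xpow j n.-1 w.
Proof.
elim: n => [|n IH]; apply: functional_extensionality => w.
  by rewrite der_one; case: (i == j); rewrite mul0r.
rewrite [LHS]/der xpowS shuf_mul_cons der_gen twist_gen IH shuf_mulZl shuf_mulZr.
case: (eqVneq i j) => [->|_]; last by rewrite shuf_mul0l !mul0r mulr0 add0r.
rewrite shuf_mul1l /=.
by case: n {IH} => [|n]; rewrite /= ?mul0r ?mulr0 -?xpowS; ring.
Qed.

Lemma xpowE j n w : xpow j n w = if w == nseq n j then qfact (q j j) n else 0.
Proof.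
elim: w n => [|i w IH] [|n] //.
  by rewrite xpowS shuf_mul_nil mul0r.
rewrite -[xpow j _ _]/(der i (xpow j n.+1) w) der_xpow IH eqseq_cons.
by case: (i == j); case: (w == _); rewrite ?mul0r ?mulr0.
Qed.

Lemma twist_xpow i j n : twist i (xpow j n) = fun w => q j i ^+ n * xpow j n w.
Proof.
apply: functional_extensionality => w; rewrite /twist !xpowE.
case: eqP => [->|_]; rewrite ?mulr0 //; congr (_ * _).
elim: n => [|n IH]; first exact: big_nil.
by rewrite -[nseq n.+1 j]/(j :: nseq n j) braid_char_cons IH exprS.
Qed.

Definition mono a b := shuf_mul q (xpow i2 a) (xpow i1 b).

Lemma mono_nil a b : mono a b [::] = ((a == 0) && (b == 0))%:R.
Proof.
rewrite /mono shuf_mul_nil !xpowE.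
by case: a b => [|a] [|b]; rewrite /= ?mulr1 ?mulr0 ?mul0r.
Qed.

Lemma der_mono2 a b : der i2 (mono a b) = fun w => qint (q i2 i2) a * mono a.-1 b w.
Proof.
apply: functional_extensionality => w.
by rewrite /der /mono shuf_mul_cons !der_xpow shuf_mulZl shuf_mulZr mul0r addr0.
Qed.

Lemma der_mono1 a b :
  der i1 (mono a b) = fun w => q i2 i1 ^+ a * qint (q i1 i1) b * mono a b.-1 w.
Proof.
apply: functional_extensionality => w.
rewrite /der /mono shuf_mul_cons !der_xpow twist_xpow shuf_mulZl !shuf_mulZr.
by rewrite shuf_mulZl mul0r add0r mulrA.
Qed.

Lemma twist_mono i a b :
  twist i (mono a b) = fun w => q i2 i ^+ a * q i1 i ^+ b * mono a b w.
Proof.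
apply: functional_extensionality => w.
by rewrite twist_shuf_mul !twist_xpow shuf_mulZl shuf_mulZr mulrA.
Qed.

Lemma gen1_mono : gen R i1 = mono 0 1.
Proof. by rewrite /mono /xpow /= shuf_mul1l shuf_mul1r. Qed.

Lemma gen2_mono : gen R i2 = mono 1 0.
Proof. by rewrite /mono /xpow /= !shuf_mul1r. Qed.

Lemma shuf_br0l g : shuf_br q (fun _ => 0) g = fun _ => 0.
Proof.
by apply: functional_extensionality => w; rewrite /shuf_br shuf_mul0l shuf_mul0r subrr.
Qed.

Lemma shuf_br0r f : shuf_br q f (fun _ => 0) = fun _ => 0.
Proof.
by apply: functional_extensionality => w; rewrite /shuf_br shuf_mul0l shuf_mul0r subrr.
Qed.

Lemma shuf_brDl f1 f2 g :
  shuf_br q (fun w => f1 w + f2 w) g = fun w => shuf_br q f1 g w + shuf_br q f2 g w.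
Proof.
by apply: functional_extensionality => w; rewrite /shuf_br shuf_mulDl shuf_mulDr; ring.
Qed.

Lemma shuf_brDr f g1 g2 :
  shuf_br q f (fun w => g1 w + g2 w) = fun w => shuf_br q f g1 w + shuf_br q f g2 w.
Proof.
by apply: functional_extensionality => w; rewrite /shuf_br shuf_mulDl shuf_mulDr; ring.
Qed.

Lemma shuf_brZl c f g : shuf_br q (fun w => c * f w) g = fun w => c * shuf_br q f g w.
Proof.
by apply: functional_extensionality => w; rewrite /shuf_br shuf_mulZl shuf_mulZr; ring.
Qed.

Lemma shuf_brZr c f g : shuf_br q f (fun w => c * g w) = fun w => c * shuf_br q f g w.
Proof.
by apply: functional_extensionality => w; rewrite /shuf_br shuf_mulZl shuf_mulZr; ring.
Qed.

Lemma lspan_eq0 (S : (word -> R) -> Prop) f : (forall w, f w = 0) -> lspan S f.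
Proof.
move=> f0; have -> : f = fun _ => 0 by apply: functional_extensionality.
exact: span0.
Qed.

Section Span.
Variable S : (word -> R) -> Prop.
Hypothesis br_S : forall g h, S g -> S h -> lspan S (shuf_br q g h).

Lemma lspan_br f g : lspan S f -> lspan S g -> lspan S (shuf_br q f g).
Proof.
have br_l h f' : S h -> lspan S f' -> lspan S (shuf_br q f' h).
  move=> Sh; elim=> [|a Sa|a b _ IHa _ IHb|c a _ IHa].
  - by rewrite shuf_br0l; apply: span0.
  - exact: br_S.
  - by rewrite shuf_brDl; apply: span_add.
  - by rewrite shuf_brZl; apply: span_scale.
move=> span_f; elim=> [|a Sa|a b _ IHa _ IHb|c a _ IHa].
- by rewrite shuf_br0r; apply: span0.
- exact: br_l.
- by rewrite shuf_brDr; apply: span_add.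
- by rewrite shuf_brZr; apply: span_scale.
Qed.

Lemma lie_gen_sub_lspan f : (forall i, S (gen R i)) -> lie_gen q f -> lspan S f.
Proof.
move=> S_gen; elim=> [i|a b _ IHa _ IHb|c a _ IHa|a b _ IHa _ IHb].
- exact/span_in/S_gen.
- exact: span_add.
- exact: span_scale.
- exact: lspan_br.
Qed.

End Span.

Lemma lspan_sub_lie_gen (S : (word -> R) -> Prop) f :
  (forall g, S g -> lie_gen q g) -> lspan S f -> lie_gen q f.
Proof.
move=> S_lie; elim=> [|a Sa|a b _ IHa _ IHb|c a _ IHa].
- have -> : (fun _ : word => 0 : R) = (fun w => 0 * gen R i1 w).
    by apply: functional_extensionality => w; rewrite mul0r.
  exact/lie_scale/lie_x.
- exact: S_lie.
- exact: lie_add.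
- exact: lie_scale.
Qed.

End QuantumShuffle.

Lemma xpow_eq0 (R : idomainType) (q : 'I_2 -> 'I_2 -> R) j n :
  ~ lt_N (q j j) n -> xpow q j n = fun _ => 0.
Proof.
move=> not_lt; apply: functional_extensionality => w; rewrite xpowE.
case: eqP => // _; apply: NNPP => qfact_neq0; apply: not_lt => N ord_N N_gt1.
by rewrite ltnNge; apply: contra_notN qfact_neq0 => /(qfact_ord ord_N N_gt1).
Qed.

Lemma lie_gen_unscale (F : fieldType) (q : 'I_2 -> 'I_2 -> F) c f :
  c != 0 -> lie_gen q (fun w => c * f w) -> lie_gen q f.
Proof.
move=> c_neq0 /(lie_scale c^-1); congr lie_gen.
by apply: functional_extensionality => w; rewrite mulKf.
Qed.

Lemma expr_cross_eq (F : fieldType) (x : F) a b c d :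
  x != 0 -> x ^+ (a + c) = 1 -> x ^+ (b + d) = 1 -> x ^+ (b * c) = x ^+ (a * d).
Proof.
move=> x_neq0 xac1 xbd1; apply: (mulIf (expf_neq0 (a * b) x_neq0)); rewrite -!exprD.
have -> : (b * c + a * b = (a + c) * b)%N by ring.
have -> : (a * d + a * b = (b + d) * a)%N by ring.
by rewrite !exprM xac1 xbd1 !expr1n.
Qed.

Section QuantumLinearSpace.
Variables (F : fieldType) (q : 'I_2 -> 'I_2 -> F).
Hypothesis qls : q i1 i2 * q i2 i1 = 1.
Local Notation x := (q i1 i2).
Local Notation mono := (mono q).

Lemma q12_neq0 : x != 0.
Proof. by apply: contra_eq_neq qls => ->; rewrite mul0r eq_sym oner_eq0. Qed.

Lemma q21E : q i2 i1 = x^-1.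
Proof. by rewrite -[q i2 i1]mul1r -(mulVf q12_neq0) -mulrA qls mulr1. Qed.

Lemma mono_mul a b c d w :
  shuf_mul q (mono a b) (mono c d) w = x ^+ (b * c) * mono (a + c) (b + d) w.
Proof.
elim: w a b c d => [|k w IH] a b c d.
  rewrite shuf_mul_nil !mono_nil.
  by case: a b c d => [|a] [|b] [|c] [|d]; rewrite /= ?muln0 ?mulr1 ?mulr0 ?mul0r.
rewrite shuf_mul_cons twist_mono -/(der k _ w).
have [->|->] := ord2_cases k.
- rewrite !der_mono1 shuf_mulZl shuf_mulZr shuf_mulZl !IH qintD q21E.
  case: b d => [|b] [|d]; rewrite /= ?(addSn, addnS, mulSn, exprD, exprVn);
  by field; rewrite ?expf_neq0 ?q12_neq0.
- rewrite !der_mono2 shuf_mulZl shuf_mulZr shuf_mulZl !IH qintD.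
  case: a c => [|a] [|c]; rewrite /= ?(addSn, addnS, mulnS, exprD);
  ring.
Qed.

Lemma mono_br a b c d : shuf_br q (mono a b) (mono c d)
  = fun w => (x ^+ (b * c) - x ^+ (a * d)) * mono (a + c) (b + d) w.
Proof.
apply: functional_extensionality => w.
by rewrite /shuf_br !mono_mul (addnC c) (addnC d) (mulnC d) mulrBl.
Qed.

Lemma lie_mono_succ1 a b : x ^+ a != 1 -> lie_gen q (mono a b) -> lie_gen q (mono a b.+1).
Proof.
move=> xa_neq1 lie_ab; apply: (@lie_gen_unscale _ _ (x ^+ a - 1)); first by rewrite subr_eq0.
have := lie_br (lie_x q i1) lie_ab.
by rewrite (gen1_mono q) mono_br mul0n mul1n expr0.
Qed.

Lemma lie_mono_succ2 a b : x ^+ b != 1 -> lie_gen q (mono a b) -> lie_gen q (mono a.+1 b).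
Proof.
move=> xb_neq1 lie_ab; apply: (@lie_gen_unscale _ _ (1 - x ^+ b)).
  by rewrite subr_eq0 eq_sym.
have := lie_br (lie_x q i2) lie_ab.
by rewrite (gen2_mono q) mono_br mul0n mul1n expr0.
Qed.

Lemma lie_mono a b : (0 < a)%N -> (0 < b)%N -> x ^+ a != 1 \/ x ^+ b != 1 ->
  lie_gen q (mono a b).
Proof.
case: a b => [|a] [|b] // _ _ xab_neq1.
have x_neq1 : x ^+ 1 != 1.
  by rewrite expr1; case: xab_neq1; apply: contra => /eqP ->; rewrite expr1n.
have lie11 : lie_gen q (mono 1 1).
  by apply: lie_mono_succ1 => //; rewrite -(gen2_mono q); apply: lie_x.
case: xab_neq1 => [xa_neq1|xb_neq1].
- have lie_a1 : lie_gen q (mono a.+1 1).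
    by elim: a {xa_neq1} => [|a IH] //; apply: lie_mono_succ2.
  by elim: b => [|b IH] //; apply: lie_mono_succ1.
- have lie_1b : lie_gen q (mono 1 b.+1).
    by elim: b {xb_neq1} => [|b IH] //; apply: lie_mono_succ1.
  by elim: a => [|a IH] //; apply: lie_mono_succ2.
Qed.

Definition lie_monos (g : word -> F) : Prop :=
  g = gen F i1 \/ g = gen F i2 \/
  exists a2 a1 : nat,
    [/\ (1 <= a2)%N /\ lt_N (q i2 i2) a2, (1 <= a1)%N /\ lt_N (q i1 i1) a1,
        (~ ord_dvd x a2 \/ ~ ord_dvd x a1)
      & g = mono a2 a1].

Lemma lie_monos_lie g : lie_monos g -> lie_gen q g.
Proof.
case=> [->|[->|[a [b [[a_gt0 _] [b_gt0 _] not_dvd ->]]]]]; try exact: lie_x.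
apply: lie_mono => //; case: not_dvd => not_dvd; [left|right]; apply/eqP.
- by move/(expr1_ord_dvd a_gt0).
- by move/(expr1_ord_dvd b_gt0).
Qed.

Lemma lie_monos_mono g : lie_monos g -> exists a b, g = mono a b.
Proof.
case=> [->|[->|[a [b [_ _ _ ->]]]]]; last by exists a, b.
- by exists 0%N, 1%N; apply: gen1_mono.
- by exists 1%N, 0%N; apply: gen2_mono.
Qed.

Lemma lie_monos_br g h : lie_monos g -> lie_monos h -> lspan lie_monos (shuf_br q g h).
Proof.
move=> /lie_monos_mono[a [b ->]] /lie_monos_mono[c [d ->]]; rewrite mono_br.
set k := x ^+ (b * c) - x ^+ (a * d).
have k0_span : k = 0 -> lspan lie_monos (fun w => k * mono (a + c) (b + d) w).
  by move=> k0; apply: lspan_eq0 => w; rewrite k0 mul0r.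
have [/eqP|ac_gt0] := posnP (a + c).
  by rewrite addn_eq0 => /andP[/eqP a0 /eqP c0]; apply: k0_span; rewrite /k a0 c0 muln0 subrr.
have [/eqP|bd_gt0] := posnP (b + d).
  by rewrite addn_eq0 => /andP[/eqP b0 /eqP d0]; apply: k0_span; rewrite /k b0 d0 muln0 subrr.
have [[dvd_ac dvd_bd]|not_dvd] := classic (ord_dvd x (a + c) /\ ord_dvd x (b + d)).
  by apply: k0_span; apply/eqP; rewrite subr_eq0; apply/eqP/expr_cross_eq;
    rewrite ?q12_neq0 ?ord_dvd_expr1.
have [lt_ac|/xpow_eq0 x2_eq0] := classic (lt_N (q i2 i2) (a + c)); last first.
  by apply: lspan_eq0 => w; rewrite /mono x2_eq0 shuf_mul0l mulr0.
have [lt_bd|/xpow_eq0 x1_eq0] := classic (lt_N (q i1 i1) (b + d)); last first.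
  by apply: lspan_eq0 => w; rewrite /mono x1_eq0 shuf_mul0r mulr0.
apply/span_scale/span_in; right; right; exists (a + c)%N, (b + d)%N.
by split=> //; apply: not_and_or.
Qed.

End QuantumLinearSpace.

Theorem theorem6p7 (F : closedFieldType) (q : 'I_2 -> 'I_2 -> F)
  (charF0 : [pchar F] =i pred0)
  (q_neq0 : forall i j, q i j != 0)
  (qls : q i1 i2 * q i2 i1 = 1) :
  forall f : word -> F,
    lie_gen q f <->
    lspan (fun g : word -> F =>
            g = gen F i1 \/ g = gen F i2 \/
            exists a2 a1 : nat,
              [/\ (1 <= a2)%N /\ lt_N (q i2 i2) a2, (1 <= a1)%N /\ lt_N (q i1 i1) a1,
                  (~ ord_dvd (q i1 i2) a2 \/ ~ ord_dvd (q i1 i2) a1)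
                & g = shuf_mul q (shuf_pow q (gen F i2) a2) (shuf_pow q (gen F i1) a1)]) f.
Proof.
move=> f; split; last exact: lspan_sub_lie_gen (lie_monos_lie qls).
apply: lie_gen_sub_lspan; first exact: lie_monos_br.
by move=> i; have [->|->] := ord2_cases i; [left|right; left].
Qed.
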